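(* Let $q$ be a prime power, $e\in\{1,2\}$, $r$ an integer ($r$ even if $e=1$, $r$ odd if $e=2$), and let $\mathcal S$ be a spread of the non-degenerate quadric $\mathcal Q_{r+2,e}$ of ${\rm PG}(r+2,q)$. If $K$ is a hyperplane of ${\rm PG}(r+2,q)$ such that $K\cap\mathcal Q_{r+2,e}$ is a non-degenerate quadric $\mathcal Q_{r+1,e-1}$ (hyperbolic if $e=1$, parabolic if $e=2$), then at most $q+1$ members of $\mathcal S$ are contained in $K$.
   Context: Notation: $\mathcal Q_{m,e}$ denotes a non-degenerate quadric of ${\rm PG}(m,q)$ which is hyperbolic $\mathcal Q^+(m,q)$ if $e=0$ ($m$ odd), parabolic $\mathcal Q(m,q)$ if $e=1$ ($m$ even), elliptic $\mathcal Q^-(m,q)$ if $e=2$ ($m$ odd). A generator of $\mathcal Q_{m,e}$ is a projective subspace of maximal dimension contained in it; generators are $\frac{m-e-1}{2}$-dimensional. A spread of $\mathcal Q_{m,e}$ is a set of $q^{\frac{m+e-1}{2}}+1$ pairwise disjoint generators. *)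

From mathcomp Require Import all_boot all_order all_algebra.
Set Implicit Arguments. Unset Strict Implicit. Unset Printing Implicit Defensive.
Import GRing.Theory.
Local Open Scope ring_scope.

(* Vectors of F^n are row vectors 'rV[F]_n; projective subspaces of PG(n-1,q)
   are vector subspaces {vspace 'rV[F]_n}: a projective subspace of projective
   dimension d is a vector subspace of dimension d+1. *)

(* The quadratic form with Gram matrix A : Q(x) = x A x^T. Every quadratic form
   on F^n is of this shape. *)
Definition qform (F : fieldType) (n : nat) (A : 'M[F]_n) (x : 'rV[F]_n) : F :=
  (x *m A *m x^T) ord0 ord0.

Definition polar (F : fieldType) (n : nat) (A : 'M[F]_n) (x y : 'rV[F]_n) : F :=
  qform A (x + y) - qform A x - qform A y.

Definition tsing (F : fieldType) (n : nat) (A : 'M[F]_n) (U : {vspace 'rV[F]_n}) :=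
  forall x, x \in U -> qform A x = 0.

(* The quadric restricted to the subspace V is non-degenerate (non-singular):
   no non-zero singular vector of V lies in the radical of the polar form on V.
   (Correct also in characteristic 2.) *)
Definition nondeg_on (F : fieldType) (n : nat) (A : 'M[F]_n) (V : {vspace 'rV[F]_n}) :=
  forall x, x \in V -> qform A x = 0 ->
    (forall y, y \in V -> polar A x y = 0) -> x = 0.

Definition witt_index_on (F : fieldType) (n : nat) (A : 'M[F]_n)
    (V : {vspace 'rV[F]_n}) (w : nat) :=
  (exists2 U : {vspace 'rV[F]_n}, (U <= V)%VS & tsing A U /\ \dim U = w) /\
  (forall U : {vspace 'rV[F]_n}, (U <= V)%VS -> tsing A U -> (\dim U <= w)%N).

(* The quadric in a subspace V of vector dimension m+1 (i.e. in PG(m,q)) is a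
   non-degenerate quadric Q_{m,e}: non-degenerate with generators of projective
   dimension (m-e-1)/2, i.e. Witt index (m+1-e)/2
   (e = 0 hyperbolic, e = 1 parabolic, e = 2 elliptic). *)
Definition is_Q_on (F : fieldType) (n : nat) (A : 'M[F]_n)
    (V : {vspace 'rV[F]_n}) (m e : nat) :=
  \dim V = m.+1 /\ nondeg_on A V /\ witt_index_on A V ((m.+1 - e) %/ 2).

Definition is_generator (F : fieldType) (n : nat) (A : 'M[F]_n)
    (U : {vspace 'rV[F]_n}) :=
  tsing A U /\
  forall U' : {vspace 'rV[F]_n}, tsing A U' -> (\dim U' <= \dim U)%N.

Definition is_spread (F : finFieldType) (n : nat) (A : 'M[F]_n) (m e : nat)
    (S : seq {vspace 'rV[F]_n}) :=
  [/\ uniq S,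
      size S = (#|F| ^ ((m + e - 1) %/ 2)).+1,
      (forall U, U \in S -> is_generator A U) &
      (forall U V, U \in S -> V \in S -> U != V -> (U :&: V = 0)%VS)].

(* Count the singular vectors of K in two ways.  Every member U of the
   spread is a generator of vector dimension w; as K is a hyperplane, U meets
   K in a subspace of dimension w, if U <= K, and at least w - 1 otherwise.
   The members of the spread are pairwise disjoint, so these intersections
   minus the origin are disjoint sets of non-zero singular vectors of K.  On
   the other hand, splitting off hyperbolic pairs shows that a non-degenerate
   quadric in dimension N with Witt index at most w has at most
   q^(N-1) + q^w - q^(N-w-1) singular vectors.  Comparing both counts leaves
   room for at most q + 1 members inside K (at most 2 if K meets the quadric
   in a hyperbolic quadric). *)

From mathcomp Require Import all_boot all_algebra finfield.
From mathcomp Require Import zify ring.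
Set Implicit Arguments. Unset Strict Implicit. Unset Printing Implicit Defensive.
Import GRing.Theory.
Local Open Scope ring_scope.

Section PolarForm.
Variables (F : fieldType) (n : nat) (A : 'M[F]_n).

Let bil (x y : 'rV[F]_n) : F := (x *m A *m y^T) ord0 ord0.

Let bilDl x y z : bil (x + y) z = bil x z + bil y z.
Proof. by rewrite /bil !mulmxDl mxE. Qed.
Let bilDr x y z : bil x (y + z) = bil x y + bil x z.
Proof. by rewrite /bil raddfD !mulmxDr mxE. Qed.
Let bilZl a x z : bil (a *: x) z = a * bil x z.
Proof. by rewrite /bil -!scalemxAl mxE. Qed.
Let bilZr a x z : bil x (a *: z) = a * bil x z.
Proof. by rewrite /bil linearZ /= -!scalemxAr mxE. Qed.

Let qform_bil x : qform A x = bil x x. Proof. by []. Qed.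

Let polar_bil x y : polar A x y = bil x y + bil y x.
Proof. by rewrite /polar !qform_bil bilDl !bilDr; ring. Qed.

Lemma polarC x y : polar A x y = polar A y x.
Proof. by rewrite !polar_bil addrC. Qed.

Lemma qformD x y : qform A (x + y) = qform A x + qform A y + polar A x y.
Proof. by rewrite /polar; ring. Qed.

Lemma qformZ a x : qform A (a *: x) = a ^+ 2 * qform A x.
Proof. by rewrite !qform_bil bilZl bilZr; ring. Qed.

Lemma qform0 : qform A 0 = 0.
Proof. by rewrite -(scale0r 0) qformZ expr0n mul0r. Qed.

Lemma tsing_vline x : qform A x = 0 -> tsing A <[x]>%VS.
Proof. by move=> Qx z /vlineP[k ->]; rewrite qformZ Qx mulr0. Qed.

Lemma polarDr x y z : polar A x (y + z) = polar A x y + polar A x z.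
Proof. by rewrite !polar_bil bilDl bilDr; ring. Qed.

Lemma polarZr a x y : polar A x (a *: y) = a * polar A x y.
Proof. by rewrite !polar_bil bilZl bilZr; ring. Qed.

Lemma polarDl x y z : polar A (x + y) z = polar A x z + polar A y z.
Proof. by rewrite polarC polarDr !(polarC z). Qed.

Lemma polarZl a x y : polar A (a *: x) y = a * polar A x y.
Proof. by rewrite polarC polarZr polarC. Qed.

Lemma polar0l y : polar A 0 y = 0.
Proof. by rewrite -(scale0r 0) polarZl mul0r. Qed.

Lemma polarNl x y : polar A (- x) y = - polar A x y.
Proof. by rewrite -scaleN1r polarZl mulN1r. Qed.

Lemma polarBl x y z : polar A (x - y) z = polar A x z - polar A y z.
Proof. by rewrite polarDl polarNl. Qed.

Lemma polar_singular x : qform A x = 0 -> polar A x x = 0.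
Proof. by move=> Qx; rewrite polar_bil qform_bil in Qx *; rewrite Qx addr0. Qed.

(* [polar A x u] is linear in [x] with matrix [polar_col u]; this makes the
   orthogonal complement of [u] the kernel of a linear map. *)
Definition polar_col (u : 'rV[F]_n) : 'cV[F]_n := (A + A^T) *m u^T.

Lemma polar_colE x u : (x *m polar_col u) 0 0 = polar A x u.
Proof.
rewrite polar_bil /bil /polar_col mulmxDl mulmxDr mxE mulmxA; congr (_ + _).
transitivity (((u *m A *m x^T)^T) 0 0); last by rewrite mxE.
by rewrite !trmx_mul trmxK mulmxA.
Qed.

Definition pair_perp (V : {vspace 'rV[F]_n}) u v : {vspace 'rV[F]_n} :=
  (V :&: lker (linfun (mulmxr (polar_col u)))
     :&: lker (linfun (mulmxr (polar_col v))))%VS.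

Lemma mem_pair_perp V u v x :
  (x \in pair_perp V u v) = [&& x \in V, polar A x u == 0 & polar A x v == 0].
Proof.
have mx11_eq0 (M : 'M[F]_1) : (M == 0) = (M 0 0 == 0).
  apply/eqP/eqP => [->|M0]; first by rewrite mxE.
  by apply/matrixP => i j; rewrite !ord1 M0 mxE.
by rewrite !memv_cap !memv_ker !lfunE /= !mx11_eq0 !polar_colE andbA.
Qed.

Lemma pair_perp_sub V u v : (pair_perp V u v <= V)%VS.
Proof. exact: subv_trans (capvSl _ _) (capvSl _ _). Qed.

End PolarForm.

Definition singular (F : finFieldType) (n : nat) (A : 'M[F]_n)
    (V : {vspace 'rV[F]_n}) : {set 'rV[F]_n} :=
  [set x | (x \in V) && (qform A x == 0)].

Lemma card_singular (F : finFieldType) (n : nat) (A : 'M[F]_n) V :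
  #|singular A V| = (\sum_(x | x \in V) (qform A x == 0%R))%N.
Proof. by rewrite -sum1dep_card big_mkcondr; apply: eq_bigr => x _; case: eqP. Qed.

Lemma sum_pairs_mul_eq (F : finFieldType) (c : F) :
  (\sum_(p : F * F) (p.1 * p.2 == c)%R = #|F|.-1 + (c == 0%R) * #|F|)%N.
Proof.
rewrite -(pair_big xpredT xpredT (fun a b => (a * b == c)%R : nat)) /=.
rewrite (bigD1 0) //= (eq_bigr (fun _ => (c == 0%R) : nat)); last first.
  by move=> b _; rewrite mul0r eq_sym.
rewrite sum_nat_const (eq_bigr (fun _ => 1%N)); last first.
  move=> a a0; rewrite (eq_bigr (fun b => (b == c / a) : nat)).
    by rewrite (bigD1 (c / a)) //= eqxx big1 // => i /negbTE ->.
  move=> b _; congr (nat_of_bool _).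
  by apply/eqP/eqP => [<-|->]; [rewrite [a * b]mulrC mulfK | rewrite mulrC divfK].
rewrite (eq_bigl (fun i => i \in predC1 0)) // sum1_card cardC1.
by rewrite addnC mulnC.
Qed.

Definition hyperbolic_pair (F : fieldType) (n : nat) (A : 'M[F]_n)
    (V : {vspace 'rV[F]_n}) (u v : 'rV[F]_n) :=
  [/\ u \in V, v \in V, qform A u = 0, qform A v = 0 & polar A u v = 1].

Section HyperbolicPair.
Variables (F : finFieldType) (n : nat) (A : 'M[F]_n).
Variables (V : {vspace 'rV[F]_n}) (u v : 'rV[F]_n).
Hypothesis uv_hyp : hyperbolic_pair A V u v.

Let Vu : u \in V. Proof. by case: uv_hyp. Qed.
Let Vv : v \in V. Proof. by case: uv_hyp. Qed.
Let Qu : qform A u = 0. Proof. by case: uv_hyp. Qed.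
Let Qv : qform A v = 0. Proof. by case: uv_hyp. Qed.
Let Puv : polar A u v = 1. Proof. by case: uv_hyp. Qed.

Local Notation W := (pair_perp A V u v).

Let Pvu : polar A v u = 1. Proof. by rewrite polarC. Qed.
Let Puu : polar A u u = 0. Proof. exact: polar_singular. Qed.
Let Pvv : polar A v v = 0. Proof. exact: polar_singular. Qed.

Let pair_comb (p : F * F * 'rV[F]_n) := p.1.1 *: u + p.1.2 *: v + p.2.
Let pair_coord x :=
  (polar A x v, polar A x u, x - polar A x v *: u - polar A x u *: v).

Let pair_coordK x : pair_comb (pair_coord x) = x.
Proof. by rewrite /pair_comb /= -[x - _ - _]addrA -opprD addrC addNKr. Qed.

Let pair_coord_perp x : x \in V -> (pair_coord x).2 \in W.
Proof.
move=> Vx; rewrite mem_pair_perp /= !polarBl !polarZl Puu Pvu Pvv Puv.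
rewrite !mulr0 !mulr1 !subr0 !subrr !eqxx !andbT.
by rewrite !rpredB ?rpredZ.
Qed.

Let pair_comb_pred p :
  (pair_comb p \in V) && (pair_coord (pair_comb p) == p) = (p.2 \in W).
Proof.
case: p => [[a b] y] /=; apply/idP/idP => [/andP[Vp /eqP coord_p]|].
  by have := pair_coord_perp Vp; rewrite coord_p.
rewrite mem_pair_perp => /and3P[Vy /eqP yu /eqP yv].
rewrite /pair_comb /pair_coord /= !rpredD ?rpredZ //=.
rewrite !polarDl !polarZl Puu Pvu Pvv Puv yu yv !mulr0 !mulr1 !addr0 !add0r.
by rewrite -addrA -opprD [_ + y]addrC addrK.
Qed.

Lemma sum_pair_decomp (g : 'rV[F]_n -> nat) :
  (\sum_(x | x \in V) g x
   = \sum_(p : F * F) \sum_(y | y \in W) g (p.1 *: u + p.2 *: v + y)%R)%N.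
Proof.
rewrite (reindex_onto pair_comb pair_coord) => [|x _]; last exact: pair_coordK.
by rewrite (eq_bigl _ _ pair_comb_pred) pair_big /=; apply: eq_bigl => -[[a b] y].
Qed.

Lemma qform_pair_comb a b y : y \in W ->
  qform A (a *: u + b *: v + y) = a * b + qform A y.
Proof.
rewrite mem_pair_perp => /and3P[_ /eqP yu /eqP yv].
rewrite !qformD !qformZ Qu Qv polarZl polarZr Puv polarDl !polarZl.
by rewrite (polarC A u) (polarC A v) yu yv; ring.
Qed.

Lemma card_pair_decomp : #|V| = (#|F| * #|F| * #|W|)%N.
Proof.
rewrite -[#|V|]sum1_card (sum_pair_decomp (fun=> 1%N)).
rewrite (eq_bigr (fun _ : F * F => #|W|)); last by move=> p _; rewrite sum1_card.
by rewrite sum_nat_const card_prod mulnC.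
Qed.

Lemma card_singular_pair_decomp :
  #|singular A V| = (#|F|.-1 * #|W| + #|F| * #|singular A W|)%N.
Proof.
rewrite card_singular sum_pair_decomp exchange_big /=.
rewrite (eq_bigr (fun y => #|F|.-1 + (qform A y == 0%R) * #|F|))%N; last first.
  move=> y Wy; under eq_bigr do rewrite qform_pair_comb // addr_eq0.
  by rewrite sum_pairs_mul_eq oppr_eq0.
by rewrite big_split /= sum_nat_const -big_distrl /= -card_singular mulnC (mulnC #|F|).
Qed.

Lemma nondeg_pair_perp : nondeg_on A V -> nondeg_on A W.
Proof.
move=> ndV x Wx Qx xW; move: (Wx); rewrite mem_pair_perp => /and3P[Vx /eqP xu /eqP xv].
apply: ndV => // z Vz; rewrite -(pair_coordK z) /pair_comb polarDr.
by rewrite (xW _ (pair_coord_perp Vz)) polarDr !polarZr xu xv !mulr0 !addr0.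
Qed.

Lemma witt_pair_perp w :
  (forall U, (U <= V)%VS -> tsing A U -> (\dim U <= w.+1)%N) ->
  (forall U, (U <= W)%VS -> tsing A U -> (\dim U <= w)%N).
Proof.
move=> wittV U UW tU.
have UWu : (U :&: <[u]> = 0)%VS.
  apply/eqP; rewrite -subv0; apply/subvP => x.
  rewrite memv_cap memv0 => /andP[xU /vlineP[k xk]].
  have := subvP UW x xU; rewrite mem_pair_perp xk !polarZl Puv mulr1.
  by case/and3P=> _ _ /eqP ->; rewrite scale0r.
have u0 : u != 0 by apply: contra_eq_neq Puv => ->; rewrite polar0l eq_sym oner_neq0.
have tUu : tsing A (U + <[u]>).
  move=> x /memv_addP[y Uy [z /vlineP[k ->] ->]].
  have := subvP UW y Uy; rewrite mem_pair_perp => /and3P[_ /eqP yu _].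
  by rewrite qformD qformZ Qu polarZr yu tU // !mulr0 !addr0.
have UuV : (U + <[u]> <= V)%VS.
  by rewrite subv_add (subv_trans UW (pair_perp_sub A V u v)); exact: Vu.
have := wittV _ UuV tUu; have := dimv_sum_cap U <[u]>.
by rewrite UWu dimv0 addn0 dim_vline u0 addn1 => ->.
Qed.

End HyperbolicPair.

Section SingularCount.
Variables (F : finFieldType) (n : nat) (A : 'M[F]_n).

Lemma hyperbolic_partner (V : {vspace 'rV[F]_n}) u :
  nondeg_on A V -> u \in V -> qform A u = 0 -> u != 0 ->
  exists v, hyperbolic_pair A V u v.
Proof.
move=> ndV Vu Qu u0.
have [y /andP[Vy Puy]] : exists y, (y \in V) && (polar A u y != 0).
  apply/existsP; apply: contraNT u0 => /existsPn noy; apply/eqP/ndV => // y Vy.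
  by apply/eqP; have := noy y; rewrite Vy negbK.
have [y' Vy' Py'] : exists2 y', y' \in V & polar A u y' = 1.
  by exists ((polar A u y)^-1 *: y); rewrite ?rpredZ // polarZr mulVf.
exists (y' - qform A y' *: u); split=> //.
- by rewrite rpredB ?rpredZ.
- rewrite qformD -scaleNr qformZ Qu polarZr (polarC A y') Py'; ring.
- by rewrite -scaleNr polarDr polarZr polar_singular // Py' mulr0 addr0.
Qed.

Lemma anisotropic_or_isotropic (V : {vspace 'rV[F]_n}) :
  (forall x, x \in V -> qform A x = 0 -> x = 0) \/
  exists2 u, u \in V & qform A u = 0 /\ u != 0.
Proof.
case: (pickP [pred x | [&& x \in V, qform A x == 0 & x != 0]]) => [u|aniso].
  by case/and3P=> Vu /eqP Qu u0; right; exists u.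
left=> x Vx Qx; apply/eqP; apply: contraFT (aniso x) => x0.
by rewrite /= Vx Qx eqxx x0.
Qed.

Lemma card_singular_anisotropic (V : {vspace 'rV[F]_n}) :
  (forall x, x \in V -> qform A x = 0 -> x = 0) -> (#|singular A V| <= 1)%N.
Proof.
move=> anisoV; rewrite -[1%N in X in (_ <= X)%N](cards1 (0 : 'rV[F]_n)).
apply/subset_leq_card/subsetP => x.
by rewrite !inE => /andP[Vx /eqP Qx]; rewrite (anisoV x Vx Qx).
Qed.

(* The bound q^(N-1) + q^w - q^(N-w-1) for N = \dim V, multiplied by q to
   avoid truncated subtraction. *)
Lemma card_singular_le w (V : {vspace 'rV[F]_n}) : nondeg_on A V ->
  (forall U, (U <= V)%VS -> tsing A U -> (\dim U <= w)%N) -> (w.*2 <= \dim V)%N ->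
  (#|F| * #|singular A V| + #|F| ^ (\dim V - w) <= #|F| ^ w.+1 + #|F| ^ \dim V)%N.
Proof.
have q1 : (1 < #|F|)%N := card_finNzRing_gt1 F.
set q := #|F| in q1 *.
have aniso_bound i (U : {vspace 'rV[F]_n}) :
    (forall x, x \in U -> qform A x = 0 -> x = 0) ->
    (q * #|singular A U| + q ^ (\dim U - i) <= q ^ i.+1 + q ^ \dim U)%N.
  move=> aniso; apply: leq_add; last by rewrite leq_exp2l // leq_subr.
  rewrite expnS leq_mul // (leq_trans (card_singular_anisotropic aniso)) //.
  by rewrite expn_gt0 ltnW.
elim: w V => [|w IH] V ndV wittV dimV;
  have [aniso|[u Vu [Qu u0]]] := anisotropic_or_isotropic V; try exact: aniso_bound.
  by have := wittV _ Vu (tsing_vline Qu); rewrite dim_vline u0.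
have [v uv_hyp] := hyperbolic_partner ndV Vu Qu u0.
set W := pair_perp A V u v.
have dimVW : \dim V = (\dim W).+2.
  apply/eqP; rewrite -(eqn_exp2l _ _ q1) -!card_vspace.
  by rewrite (card_pair_decomp uv_hyp) card_vspace !expnS mulnA.
rewrite dimVW in dimV *; rewrite (card_singular_pair_decomp uv_hyp) -/W.
have := IH W (nondeg_pair_perp uv_hyp ndV) (witt_pair_perp uv_hyp wittV).
rewrite doubleS !ltnS in dimV => /(_ dimV).
have wW : (w <= \dim W)%N by rewrite (leq_trans (leq_addl w w)) // addnn.
rewrite subSS (subSn wW) !expnS card_vspace -/q.
set s := #|singular A W|; set X := (q ^ (\dim W - w))%N; set Y := (q ^ \dim W)%N.
move=> IHW; have q_pred : (q = q.-1.+1)%N by rewrite prednK // ltnW.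
have -> : (q * (q.-1 * Y + q * s) + q * X = q.-1 * q * Y + q * (q * s + X))%N by ring.
rewrite (leq_trans (leq_add (leqnn _) (leq_mul (leqnn q) IHW))) //.
by apply: eq_leq; rewrite q_pred /=; ring.
Qed.
End SingularCount.

Lemma card_bigcup_seq_disjoint (T : finType) (I : eqType) (s : seq I)
    (f : I -> {set T}) :
  uniq s -> {in s &, forall i j, i != j -> [disjoint f i & f j]} ->
  #|\bigcup_(i <- s) f i| = (\sum_(i <- s) #|f i|)%N.
Proof.
elim: s => [|i s IH] /=; first by rewrite !big_nil cards0.
case/andP=> i_s s_uniq disj; rewrite !big_cons -IH //; last first.
  by move=> j k js ks; apply: disj; rewrite inE ?js ?ks orbT.
rewrite cardsU (disjoint_setI0 _) ?cards0 ?subn0 //.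
rewrite disjoints_subset big_seq.
apply: (@big_ind _ (fun X : {set T} => f i \subset ~: X)).
- by rewrite setC0 subsetT.
- by move=> X Y; rewrite setCU subsetI => -> ->.
- move=> j js; rewrite -disjoints_subset disj ?inE ?js ?eqxx ?orbT //.
  by apply: contraNneq i_s => ->.
Qed.

Lemma sum_card_cap_singular (F : finFieldType) (n : nat) (A : 'M[F]_n)
    (K : {vspace 'rV[F]_n}) (S : seq {vspace 'rV[F]_n}) :
  uniq S -> (forall U, U \in S -> tsing A U) ->
  (forall U V, U \in S -> V \in S -> U != V -> (U :&: V = 0)%VS) ->
  (\sum_(U <- S) #|(U :&: K)%VS| + 1 <= #|singular A K| + size S)%N.
Proof.
move=> S_uniq S_tsing S_disj.
pose punctured (U : {vspace 'rV[F]_n}) := [set x in (U :&: K)%VS] :\ 0.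
have card_cap U : #|(U :&: K)%VS| = #|punctured U|.+1.
  by rewrite -[LHS]cardsE (cardsD1 0) inE mem0v.
have punctured_disj :
    {in S &, forall U V, U != V -> [disjoint punctured U & punctured V]}.
  move=> U V US VS UV; rewrite -setI_eq0; apply/eqP/setP => x; rewrite !inE.
  apply/negbTE; apply/negP => /and3P[/andP[x0 UKx] _ VKx].
  move: UKx VKx; rewrite !memv_cap => /andP[Ux _] /andP[Vx _].
  by move: (memv_cap x U V); rewrite S_disj // memv0 (negbTE x0) Ux Vx.
have punctured_sub : \bigcup_(U <- S) punctured U \subset singular A K :\ 0.
  rewrite big_seq.
  apply: (@big_ind _ (fun X : {set 'rV[F]_n} => X \subset singular A K :\ 0)).
  - exact: sub0set.
  - by move=> X Y XK YK; rewrite subUset XK.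
  move=> U US; apply/subsetP => x; rewrite !inE memv_cap => /andP[-> /andP[Ux ->]].
  by rewrite (S_tsing U) ?eqxx.
have sing0 : (0 : 'rV[F]_n) \in singular A K by rewrite inE mem0v qform0 eqxx.
under eq_bigr do rewrite card_cap -addn1.
rewrite big_split /= sum1_size -card_bigcup_seq_disjoint //.
rewrite (cardsD1 0 (singular A K)) sing0.
by rewrite /= addn1 add1n addSn ltnS leq_add2r subset_leq_card.
Qed.

Lemma dimv_cap_ge (K : fieldType) (vT : vectType K) (U V : {vspace vT}) :
  (\dim U + \dim V <= \dim (U :&: V) + \dim {:vT})%N.
Proof. by rewrite -dimv_sum_cap addnC leq_add2l dimvS // subvf. Qed.

Lemma sum_card_cap_hyperplane_ge (F : finFieldType) (n w : nat)
    (K : {vspace 'rV[F]_n}) (S : seq {vspace 'rV[F]_n}) :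
  (\dim K).+1 = n -> (forall U, U \in S -> \dim U = w) ->
  (count (fun U => U <= K)%VS S * #|F| ^ w
     + count (fun U => ~~ (U <= K)%VS) S * #|F| ^ w.-1
   <= \sum_(U <- S) #|(U :&: K)%VS|)%N.
Proof.
move=> dimK; elim: S => [|U S IH] dimS; first by rewrite big_nil.
have := IH (fun V VS => dimS V (mem_behead (VS : V \in behead (U :: S)))).
rewrite big_cons /=.
have cardU : ((if (U <= K)%VS then #|F| ^ w else #|F| ^ w.-1) <= #|(U :&: K)%VS|)%N.
  rewrite card_vspace -(dimS U (mem_head _ _)); case: ifP => [UK|_].
    by rewrite (capv_idPl UK).
  rewrite leq_exp2l ?card_finNzRing_gt1 //.
  have dim_full : \dim {:'rV[F]_n} = n by rewrite dimvf /dim /= mul1n.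
  have := dimv_cap_ge U K; rewrite dim_full -[X in (_ <= _ + X)%N]dimK addnS -addSn.
  by rewrite leq_add2r -subn1 leq_subLR add1n.
by case: (U <= K)%VS cardU => /= cardU; rewrite ?mulnDl ?mul1n ?mul0n ?add0n; lia.
Qed.

Lemma dim_generator (F : fieldType) (n : nat) (A : 'M[F]_n) (w : nat)
    (U : {vspace 'rV[F]_n}) :
  witt_index_on A fullv w -> is_generator A U -> \dim U = w.
Proof.
case=> [[U0 _ [U0_tsing <-]] witt] [U_tsing U_max].
by apply/eqP; rewrite eqn_leq U_max // witt ?subvf.
Qed.

(* [k] and [k'] count the members of the spread inside and outside [K], [s]
   the singular vectors of [K]; [m] is [r %/ 2]. *)
Section SpreadCountArithmetic.
Local Open Scope nat_scope.

Lemma spread_count_hyperbolic_section q m k k' s sum_cap : 1 < q ->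
  k + k' = (q ^ m.+1).+1 ->
  q * s + q ^ m.+1 <= q ^ m.+2 + q ^ m.*2.+2 ->
  sum_cap + 1 <= s + (q ^ m.+1).+1 ->
  k * q ^ m.+1 + k' * q ^ m <= sum_cap -> k <= 2.
Proof.
move=> q1; have x0 : 0 < q ^ m by rewrite expn_gt0 ltnW.
rewrite !expnS -addnn expnD; set x := q ^ m => cnt sing cover lower.
have {}sing : s + x <= q * x + q * (x * x).
  by rewrite -(leq_pmul2l (ltnW q1)) !mulnDr.
have [p qp] : exists p, q = p.+1 by exists q.-1; rewrite prednK // ltnW.
have split_k : k * (q * x) + k' * x = k * (p * x) + (k + k') * x by rewrite qp; ring.
have qx : q * x = p * x + x by rewrite qp; ring.
have qxx : (q * x).+1 * x = q * (x * x) + x by ring.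
rewrite -(leq_pmul2r (_ : 0 < p * x)); last by rewrite muln_gt0 x0 -ltnS -qp q1.
rewrite cnt in split_k; lia.
Qed.

Lemma spread_count_parabolic_section q m k k' s sum_cap : 1 < q ->
  k + k' = (q ^ m.+2).+1 ->
  q * s + q ^ m.+2 <= q ^ m.+2 + q ^ m.*2.+3 ->
  sum_cap + 1 <= s + (q ^ m.+2).+1 ->
  k * q ^ m.+1 + k' * q ^ m <= sum_cap -> k <= q.+1.
Proof.
move=> q1; have x0 : 0 < q ^ m by rewrite expn_gt0 ltnW.
rewrite !expnS -addnn expnD; set x := q ^ m => cnt sing cover lower.
have {}sing : s <= q * (q * (x * x)).
  by rewrite -(leq_pmul2l (ltnW q1)) -(leq_add2r (q * (q * x))) [X in _ <= X]addnC.
have [p qp] : exists p, q = p.+1 by exists q.-1; rewrite prednK // ltnW.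
have split_k : k * (q * x) + k' * x = k * (p * x) + (k + k') * x by rewrite qp; ring.
have qqx : q * (q * x) = p.+2 * (p * x) + x by rewrite qp; ring.
have qqxx : (q * (q * x)).+1 * x = q * (q * (x * x)) + x by ring.
rewrite -(leq_pmul2r (_ : 0 < p * x)); last by rewrite muln_gt0 x0 -ltnS -qp q1.
rewrite cnt in split_k; rewrite qp; lia.
Qed.

End SpreadCountArithmetic.

Theorem mainTheorem4 (F : finFieldType) (e r : nat)
    (he : (e = 1%N /\ ~~ odd r) \/ (e = 2%N /\ odd r))
    (A : 'M[F]_(r.+3))
    (hQ : is_Q_on A fullv r.+2 e)
    (S : seq {vspace 'rV[F]_(r.+3)})
    (hS : is_spread A r.+2 e S)
    (K : {vspace 'rV[F]_(r.+3)})
    (hK : is_Q_on A K r.+1 e.-1) :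
  (count (fun U => (U <= K)%VS) S <= #|F|.+1)%N.
Proof.
have [_ [_ witt_full]] := hQ.
have [dimK [ndK [_ wittK]]] := hK.
have [S_uniq S_size S_gen S_disj] := hS.
have S_tsing U : U \in S -> tsing A U by case/S_gen.
have S_dim U : U \in S -> \dim U = ((r.+3 - e) %/ 2)%N.
  by move=> US; apply: dim_generator witt_full (S_gen U US).
have := sum_card_cap_hyperplane_ge (congr1 succn dimK) S_dim.
have := sum_card_cap_singular K S_uniq S_tsing S_disj.
have := card_singular_le ndK wittK.
have := count_predC (fun U => (U <= K)%VS) S; rewrite S_size dimK.
have q1 : (1 < #|F|)%N := card_finNzRing_gt1 F.
case: he => [[-> r_even]|[-> r_odd]].
- have [m r_m] : exists m, r = m.*2.
    by exists r./2; rewrite -{1}(odd_double_half r) (negbTE r_even).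
  subst r; rewrite (_ : (m.*2.+2 + 1 - 1) %/ 2 = m.+1)%N; last by lia.
  rewrite (_ : (m.*2.+2 - 1.-1) %/ 2 = m.+1)%N; last by lia.
  rewrite (_ : (m.*2.+2 - m.+1 = m.+1)%N); last by lia.
  move=> cnt /(_ (leqnn _)) sing cover lower; apply: leq_trans (leqW q1).
  exact: spread_count_hyperbolic_section q1 cnt sing cover lower.
- have [m r_m] : exists m, r = m.*2.+1.
    by exists r./2; rewrite -{1}(odd_double_half r) r_odd.
  subst r; rewrite (_ : (m.*2.+3 + 2 - 1) %/ 2 = m.+2)%N; last by lia.
  rewrite (_ : (m.*2.+3 - 2.-1) %/ 2 = m.+1)%N; last by lia.
  rewrite (_ : (m.*2.+3 - m.+1 = m.+2)%N); last by lia.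
  move=> cnt /(_ (leqnSn _)) sing cover lower.
  exact: spread_count_parabolic_section q1 cnt sing cover lower.
Qed.
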